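(* Let $P$ be a finitely generated abelian group and $A\subset P$ a subgroup. For subgroups $B,B'$ with $A\subset B\subset P$ and $A\subset B'\subset P$, say that $B$ and $B'$ are equivalent if there is an isomorphism $B\to B'$ which restricts to the identity on $A$. Then there are only finitely many equivalence classes. *)

From mathcomp Require Import all_boot all_order all_algebra.
Set Implicit Arguments. Unset Strict Implicit. Unset Printing Implicit Defensive.
Import GRing.Theory.
Local Open Scope ring_scope.

Definition fin_gen (P : zmodType) : Prop :=
  exists n : nat, exists g : 'I_n -> P,
    forall x : P, exists c : 'I_n -> int, x = \sum_(i < n) g i *~ c i.

Definition is_subgroup (P : zmodType) (B : P -> Prop) : Prop :=
  B 0 /\ (forall x y, B x -> B y -> B (x - y)).

Definition subset_of (P : Type) (A B : P -> Prop) : Prop :=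
  forall x, A x -> B x.

(* The isomorphism is represented
   by a function f : P -> P whose restriction to B is a bijective group
   homomorphism onto B' (values outside B are irrelevant). *)
Definition equiv_over (P : zmodType) (A B B' : P -> Prop) : Prop :=
  exists f : P -> P,
    (forall x, B x -> B' (f x)) /\
    (forall x y, B x -> B y -> f (x + y) = f x + f y) /\
    (forall x y, B x -> B y -> f x = f y -> x = y) /\
    (forall y, B' y -> exists2 x, B x & f x = y) /\
    (forall a, A a -> f a = a).

(* Writing P as a quotient of Z^n, subgroups between A and P correspond to
   subgroups between the preimage of A and Z^n, and isomorphisms over the
   preimage descend to P; so we may take P = Z^n.  The saturation K of A (the
   integral points of its rational span) is the kernel of an integer matrix L,
   and d K <= A for some d > 0.  For A <= B the image B L is free, so B is
   isomorphic over A to (B :&: K) (+) Z^s with s <= n, and B :&: K, which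
   contains d K, is determined by the residues of K / d K it contains.  The
   rank s and this finite set of residues then determine B up to isomorphism
   over A. *)

From mathcomp Require Import all_boot all_order all_algebra.
From mathcomp Require Import boolp.
Set Implicit Arguments. Unset Strict Implicit. Unset Printing Implicit Defensive.
Import Order.TTheory GRing.Theory Num.Theory.
Local Open Scope ring_scope.

Section SubgroupClosure.
Variables (P : zmodType) (B : P -> Prop).
Hypothesis hB : is_subgroup B.

Lemma subgroup0 : B 0. Proof. by case: hB. Qed.

Lemma subgroupB x y : B x -> B y -> B (x - y).
Proof. by case: hB => _; apply. Qed.

Lemma subgroupN x : B x -> B (- x).
Proof. by move=> Bx; rewrite -sub0r; apply: subgroupB => //; apply: subgroup0. Qed.

Lemma subgroupD x y : B x -> B y -> B (x + y).
Proof. by move=> Bx By; rewrite -[y]opprK; apply: subgroupB => //; apply: subgroupN. Qed.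

Lemma subgroupMz x z : B x -> B (x *~ z).
Proof.
move=> Bx; have BMn m : B (x *+ m).
  elim: m => [|m IH]; first by rewrite mulr0n; apply: subgroup0.
  by rewrite mulrS; apply: subgroupD.
case: z => m; first exact: BMn.
by rewrite NegzE mulrNz; apply: subgroupN; apply: BMn.
Qed.

Lemma subgroup_sum (I : Type) (r : seq I) (Q : pred I) (F : I -> P) :
  (forall i, Q i -> B (F i)) -> B (\sum_(i <- r | Q i) F i).
Proof. by move=> BF; apply: big_ind => //; [apply: subgroup0 | apply: subgroupD]. Qed.

End SubgroupClosure.

Lemma subgroupZ (V : lmodType int) (B : V -> Prop) (z : int) v :
  is_subgroup B -> B v -> B (z *: v).
Proof. by move=> hB Bv; rewrite -[z]intz scaler_int; apply: subgroupMz. Qed.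

Lemma subgroup_mulmx n s (B : 'rV[int]_n -> Prop) (M : 'M[int]_(s, n)) :
  is_subgroup B -> (forall i, B (row i M)) -> forall u, B (u *m M).
Proof.
move=> hB BM u; rewrite mulmx_sum_row.
by apply: subgroup_sum => // i _; apply: subgroupZ.
Qed.

Lemma int_subgroup_principal (I : int -> Prop) :
  is_subgroup I -> exists2 b, I b & forall t, I t -> (b %| t)%Z.
Proof.
move=> hI.
have [[t [It t_neq0]] | only0] := pselect (exists t, I t /\ t != 0); last first.
  exists 0 => [|t It]; first exact: subgroup0.
  have /eqP -> : t == 0 by apply/negPn/negP => t_neq0; apply: only0; exists t.
  exact: dvdz0.
have I_abs : I `|t|%N.
  by case: (ger0P t) => [/gez0_abs -> | /ltz0_abs ->] //; apply: subgroupN.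
have ex_pos : exists m, (0 < m)%N && `[< I m%:Z >].
  by exists `|t|%N; rewrite absz_gt0 t_neq0; apply/asboolP.
case: (ex_minnP ex_pos) => m /andP[m_gt0 /asboolP Im] m_min.
exists m%:Z => // u Iu; apply/dvdz_mod0P.
have m_neq0 : m%:Z != 0 by rewrite eqz_nat -lt0n.
have Ir : I (u %% m)%Z.
  have -> : (u %% m)%Z = u - (u %/ m)%Z * m.
    by rewrite {2}(divz_eq u m) addrC addKr.
  by apply: subgroupB => //; rewrite mulrC -mulrzz; apply: subgroupMz.
apply/eqP/negPn/negP => r_neq0.
have r_ge0 := modz_ge0 u m_neq0.
have : (m <= `|(u %% m)%Z|)%N.
  by apply: m_min; rewrite absz_gt0 r_neq0 /=; apply/asboolP; rewrite gez0_abs.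
by rewrite -lez_nat gez0_abs // leNgt ltz_mod.
Qed.

Definition int_basis n s (G : 'rV[int]_n -> Prop) (M : 'M[int]_(s, n)) :=
  (forall x, G x <-> exists u, x = u *m M) /\
  (forall u : 'rV_s, u *m M = 0 -> u = 0).

Lemma int_basis_subgroup n s (G : 'rV[int]_n -> Prop) (M : 'M[int]_(s, n)) :
  int_basis G M -> forall u, G (u *m M).
Proof. by case=> GM _ u; apply/GM; exists u. Qed.

Lemma int_basis_col_mx n s (G : 'rV[int]_n -> Prop) (j : 'I_n)
    (M0 : 'M[int]_(s, n)) (beta : 'rV[int]_n) :
  is_subgroup G -> G beta -> beta 0 j != 0 ->
  (forall x, G x -> (beta 0%R j %| x 0%R j)%Z) ->
  int_basis (fun x => G x /\ x 0 j = 0) M0 -> int_basis G (col_mx M0 beta).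
Proof.
move=> hG Gbeta beta_neq0 beta_dvd [G0M0 freeM0].
have M0_j (u : 'rV_s) : G (u *m M0) /\ (u *m M0) 0 j = 0.
  by apply/G0M0; exists u.
split=> [x | u]; first split=> [Gx | [u ->]].
- have /dvdzP[q xq] := beta_dvd x Gx.
  have [|u0 x_eq] := (G0M0 (x - q *: beta)).1.
    split; last by rewrite !mxE xq mulrC subrr.
    by apply: subgroupB => //; apply: subgroupZ.
  by exists (row_mx u0 q%:M); rewrite mul_row_col mul_scalar_mx -x_eq subrK.
- rewrite -[u]hsubmxK mul_row_col; apply: subgroupD => //; first exact: (M0_j _).1.
  by apply: subgroup_mulmx => // i; rewrite (ord1 i) row_id.
rewrite -[u]hsubmxK mul_row_col => u_eq0.
have ur0 : rsubmx u = 0.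
  move/(congr1 (fun v : 'rV_n => v 0 j)): u_eq0; rewrite /= mxE (M0_j _).2 add0r.
  rewrite [LHS]mxE big_ord1 mxE [RHS]mxE => /eqP.
  rewrite mulf_eq0 (negbTE beta_neq0) orbF => /eqP ur.
  by apply/rowP => i; rewrite (ord1 i) !mxE ur.
by move: u_eq0; rewrite ur0 mul0mx addr0 => /freeM0 ->; rewrite row_mx0.
Qed.

Lemma int_basis_exists_supp n (j : nat) (G : 'rV[int]_n -> Prop) : (j <= n)%N ->
  is_subgroup G -> (forall x, G x -> forall i : 'I_n, (j <= i)%N -> x 0 i = 0) ->
  exists s (M : 'M[int]_(s, n)), (s <= j)%N /\ int_basis G M.
Proof.
elim: j G => [|j IH] G j_le_n hG G_supp.
  exists 0%N, 0; split => //; split => [x | u _]; last by apply/rowP => -[].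
  split=> [Gx | [u ->]]; last by rewrite mulmx0; apply: subgroup0.
  by exists 0; rewrite mulmx0; apply/rowP => i; rewrite mxE G_supp.
pose oj := Ordinal j_le_n; pose G0 x := G x /\ x 0 oj = 0.
have hG0 : is_subgroup G0.
  split; first by split; [apply: subgroup0 | rewrite mxE].
  by move=> x y [Gx x0] [Gy y0]; split; [apply: subgroupB | rewrite !mxE x0 y0 subr0].
have [|s [M0 [s_le_j basisM0]]] := IH G0 (ltnW j_le_n) hG0.
  move=> x [Gx x0] i; rewrite leq_eqVlt => /orP[/eqP j_eq_i | ]; last exact: G_supp.
  by have -> : i = oj by apply/val_inj.
have hI : is_subgroup (fun t => exists2 x, G x & x 0 oj = t).
  split; first by exists 0; [apply: subgroup0 | rewrite mxE].
  by move=> _ _ [x Gx <-] [y Gy <-]; exists (x - y); [apply: subgroupB | rewrite !mxE].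
have [_ [beta Gbeta <-] beta_dvd] := int_subgroup_principal hI.
have [beta0 | beta_neq0] := eqVneq (beta 0 oj) 0.
  exists s, M0; split; first exact: leqW.
  case: basisM0 => G0M0 freeM0; split => // x; rewrite -G0M0.
  split => [Gx | []//]; split => //; apply/eqP.
  by rewrite -dvd0z -beta0; apply: beta_dvd; exists x.
exists (s + 1)%N, (col_mx M0 beta); split; first by rewrite addn1.
by apply: (int_basis_col_mx (j := oj)) => // x Gx; apply: beta_dvd; exists x.
Qed.

Lemma int_basis_exists n (G : 'rV[int]_n -> Prop) :
  is_subgroup G -> exists s (M : 'M[int]_(s, n)), (s <= n)%N /\ int_basis G M.
Proof.
move=> hG; apply: int_basis_exists_supp => //.
by move=> x _ i; rewrite leqNgt ltn_ord.
Qed.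

Lemma map_mx_intr_inj m p :
  injective (map_mx intr : 'M[int]_(m, p) -> 'M[rat]_(m, p)).
Proof.
move=> M1 M2 /matrixP eqM; apply/matrixP => i j.
by move: (eqM i j); rewrite !mxE => /intr_inj.
Qed.

Lemma rat_mx_int_multiple m p (M : 'M[rat]_(m, p)) :
  exists2 e : int, 0 < e & exists Mz : 'M[int]_(m, p), map_mx intr Mz = e%:~R *: M.
Proof.
exists (\prod_(k : 'I_m * 'I_p) denq (M k.1 k.2)).
  by apply: prodr_gt0 => k _; apply: denq_gt0.
pose cofactor i j := \prod_(k : 'I_m * 'I_p | k != (i, j)) denq (M k.1 k.2).
exists (\matrix_(i, j) (numq (M i j) * cofactor i j)).
apply/matrixP => i j; rewrite !mxE intrM numqE (bigD1 (i, j)) //= intrM.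
by rewrite [RHS]mulrC mulrA.
Qed.

Lemma int_subgroup_saturation n (A : 'rV[int]_n -> Prop) : is_subgroup A ->
  exists (L : 'M[int]_n) (d : int), [/\ 0 < d,
    forall x, A x -> x *m L = 0 & forall x, x *m L = 0 -> A (d *: x)].
Proof.
move=> hA; have [sa [Amat [_ [AAmat _]]]] := int_basis_exists hA.
pose AQ := map_mx intr Amat : 'M[rat]_(sa, n).
have [e e_gt0 [L hL]] := rat_mx_int_multiple (cokermx AQ).
have [d d_gt0 [Pz hPz]] := rat_mx_int_multiple (pinvmx AQ).
have mapL (x : 'rV_n) :
    map_mx intr (x *m L) = e%:~R *: (map_mx intr x *m cokermx AQ).
  by rewrite map_mxM hL -scalemxAr.
exists L, d; split => // x.
  case/AAmat => u ->; apply: map_mx_intr_inj.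
  by rewrite mapL map_mxM -mulmxA mulmx_coker mulmx0 scaler0 map_mx0.
move=> xL0; apply/AAmat; exists (x *m Pz); apply: map_mx_intr_inj.
have xQ_in : (map_mx intr x <= AQ)%MS.
  have : map_mx intr (x *m L) = 0 :> 'rV[rat]_n by rewrite xL0 map_mx0.
  rewrite mapL => /eqP.
  by rewrite scaler_eq0 intr_eq0 gt_eqF //= submxE.
by rewrite map_mxZ !map_mxM hPz -scalemxAr -scalemxAl mulmxKpV.
Qed.

(* Such [M] makes [B] the direct sum of [B :&: ker L] and the row span of [M]. *)
Definition complement_basis n s (L : 'M[int]_n) (B : 'rV[int]_n -> Prop)
    (M : 'M[int]_(s, n)) :=
  [/\ forall u, B (u *m M), forall u : 'rV_s, u *m M *m L = 0 -> u = 0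
    & forall x, B x -> exists u, x *m L = u *m M *m L].

Lemma complement_basis_exists n (L : 'M[int]_n) (B : 'rV[int]_n -> Prop) :
  is_subgroup B ->
  exists s (M : 'M[int]_(s, n)), (s <= n)%N /\ complement_basis L B M.
Proof.
move=> hB; pose BL y := exists2 x, B x & y = x *m L.
have hBL : is_subgroup BL.
  split; first by exists 0; [apply: subgroup0 | rewrite mul0mx].
  move=> _ _ [x Bx ->] [y By ->].
  by exists (x - y); [apply: subgroupB | rewrite mulmxBl].
have [s [C [s_le_n [BLC freeC]]]] := int_basis_exists hBL.
have /choice[X hX] : forall i, exists x, B x /\ x *m L = row i C.
  move=> i; have [|x Bx xL] := (BLC (row i C)).2; last by exists x.
  by exists (delta_mx 0 i); rewrite -rowE.
pose M := \matrix_i X i.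
have MLC : M *m L = C by apply/row_matrixP => i; rewrite row_mul rowK (hX i).2.
exists s, M; split => //; split => [u | u | x Bx].
- by apply: subgroup_mulmx => // i; rewrite rowK; apply: (hX i).1.
- by rewrite -mulmxA MLC; apply: freeC.
- by have [|u ->] := (BLC (x *m L)).1; [exists x | exists u; rewrite -mulmxA MLC].
Qed.

Lemma complement_coef_uniq n s (L : 'M[int]_n) (B : 'rV[int]_n -> Prop)
    (M : 'M[int]_(s, n)) (u v : 'rV_s) :
  complement_basis L B M -> u *m M *m L = v *m M *m L -> u = v.
Proof.
case=> _ freeM _ /eqP; rewrite -subr_eq0 -!mulmxBl => /eqP/freeM/eqP.
by rewrite subr_eq0 => /eqP.
Qed.

Lemma complement_shift n s (L : 'M[int]_n) (B B' : 'rV[int]_n -> Prop)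
    (M M' : 'M[int]_(s, n)) (u : 'rV_s) x :
  is_subgroup B -> is_subgroup B' -> (forall y, y *m L = 0 -> B y -> B' y) ->
  (forall v, B (v *m M)) -> (forall v, B' (v *m M')) ->
  B x -> x *m L = u *m M *m L -> B' (x + u *m (M' - M)).
Proof.
move=> hB hB' BB' BM BM' Bx xL.
rewrite mulmxBr addrA addrC addrA; apply: subgroupD => //.
rewrite addrC; apply: BB'; first by rewrite mulmxBl xL subrr.
by apply: subgroupB.
Qed.

Section ComplementIsomorphism.
Variables (n s : nat) (L : 'M[int]_n) (A B B' : 'rV[int]_n -> Prop).
Variables (M M' : 'M[int]_(s, n)).
Hypotheses (hB : is_subgroup B) (hB' : is_subgroup B') (AB : subset_of A B).
Hypothesis AL : forall a, A a -> a *m L = 0.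
Hypotheses (BM : complement_basis L B M) (BM' : complement_basis L B' M').
Hypothesis BB'_ker : forall x, x *m L = 0 -> (B x <-> B' x).

(* Write [x = (x - u *m M) + u *m M] with [x *m L = u *m M *m L]: the first
   summand lies in [B :&: ker L = B' :&: ker L], and the isomorphism keeps it
   while replacing [M] by [M']. *)
Lemma equiv_over_complement : equiv_over A B B'.
Proof.
have [BMu _ spanM] := BM; have [BM'u _ spanM'] := BM'.
have /choice[k hk] : forall x, exists u, B x -> x *m L = u *m M *m L.
  move=> x; have [Bx | nBx] := pselect (B x); last by exists 0.
  by have [u xL] := spanM x Bx; exists u.
have coefE x u : B x -> x *m L = u *m M *m L -> k x = u.
  by move=> Bx xL; apply: (complement_coef_uniq BM); rewrite -hk.
pose f x := x + k x *m (M' - M).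
have fB x : B x -> B' (f x).
  move=> Bx; apply: (complement_shift hB hB') => //; last exact: hk.
  by move=> y yL; apply: (BB'_ker yL).1.
have fL x : B x -> f x *m L = k x *m M' *m L.
  by move=> Bx; rewrite mulmxDl !mulmxBr mulmxBl hk // addrC subrK.
exists f; do !split; [exact: fB | move=> x y Bx By | move=> x y Bx By fxy
  | move=> y B'y | move=> a Aa].
- have Bxy := subgroupD hB Bx By.
  rewrite /f (coefE (x + y) (k x + k y)) //; last by rewrite !mulmxDl -!hk.
  by rewrite mulmxDl addrACA.
- have kxy : k x = k y by apply: (complement_coef_uniq BM'); rewrite -!fL ?fxy.
  by move: fxy; rewrite /f kxy => /addIr.
- have [u yL] := spanM' y B'y.
  have Bx : B (y + u *m (M - M')).
    apply: (complement_shift (L := L) hB' hB) => // z zL; apply: (BB'_ker zL).2.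
  exists (y + u *m (M - M')) => //.
  rewrite /f (coefE _ u) //; last first.
    by rewrite mulmxDl !mulmxBr mulmxBl yL addrC subrK.
  by rewrite -addrA -mulmxDr addrACA -opprD [M' + M]addrC subrr mulmx0 addr0.
rewrite /f (coefE a 0) ?mul0mx ?addr0 //; first exact: AB.
by rewrite AL // !mul0mx.
Qed.

End ComplementIsomorphism.

Lemma finite_classes_of_invariant (T : Type) (K : finType) (good : T -> Prop)
    (rel : T -> T -> Prop) (inv : T -> K -> Prop) (t0 : T) :
  good t0 ->
  (forall t, good t -> exists k, inv t k) ->
  (forall t t' k, good t -> good t' -> inv t k -> inv t' k -> rel t t') ->
  exists N (C : 'I_N -> T),
    (forall i, good (C i)) /\ (forall t, good t -> exists i, rel t (C i)).
Proof.
move=> good0 inv_ex inv_rel.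
have /choice[C hC] : forall k,
    exists c, good c /\ forall t, good t -> inv t k -> rel t c.
  move=> k.
  have [[t [gt it]] | no_t] := pselect (exists t, good t /\ inv t k).
    by exists t; split => // t' gt' it'; apply: inv_rel it' it.
  by exists t0; split => // t gt it; case: no_t; exists t.
exists #|K|, (C \o enum_val); split => [i | t gt]; first exact: (hC _).1.
have [k ik] := inv_ex t gt.
by exists (enum_rank k); rewrite /= enum_rankK; apply: (hC k).2.
Qed.

Definition finitely_many_classes (P : zmodType) (A : P -> Prop) : Prop :=
  exists n (C : 'I_n -> (P -> Prop)),
    (forall i, is_subgroup (C i) /\ subset_of A (C i)) /\
    (forall B, is_subgroup B -> subset_of A B -> exists i, equiv_over A B (C i)).

Section IntInvariant.
Variables (n : nat) (A : 'rV[int]_n -> Prop) (L : 'M[int]_n) (d : int).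
Hypothesis d_gt0 : 0 < d.
Hypotheses (AL : forall x, A x -> x *m L = 0) (LA : forall x, x *m L = 0 -> A (d *: x)).
Variables (sk : nat) (E : 'M[int]_(sk, n)).
Hypothesis kerE : int_basis (fun x => x *m L = 0) E.

Local Notation residue := {ffun 'I_sk -> 'I_`|d|}.

Definition residue_vec (r : residue) : 'rV[int]_n := \row_i (r i : int) *m E.

Lemma kernel_residue_decomp x :
  x *m L = 0 -> exists r w, w *m L = 0 /\ x = residue_vec r + d *: w.
Proof.
have d_neq0 : d != 0 by rewrite gt_eqF.
have mod_lt t : (`|(t %% d)%Z| < `|d|)%N.
  rewrite -ltz_nat !gez0_abs ?modz_ge0 ?(ltW d_gt0) //.
  by move: (ltz_mod t d_neq0); rewrite gtr0_norm.
case/(kerE.1 x) => u ->.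
exists [ffun i => Ordinal (mod_lt (u 0 i))], (\row_i (u 0%R i %/ d)%Z *m E).
split; first exact: (int_basis_subgroup kerE).
rewrite /residue_vec scalemxAl -mulmxDl; congr (_ *m _); apply/rowP => i.
by rewrite !mxE ffunE /= gez0_abs ?modz_ge0 // mulrC addrC -divz_eq.
Qed.

Lemma subgroups_agree_on_kernel (B B' : 'rV[int]_n -> Prop) :
  is_subgroup B -> subset_of A B -> is_subgroup B' -> subset_of A B' ->
  (forall r, B (residue_vec r) <-> B' (residue_vec r)) ->
  forall x, x *m L = 0 -> (B x <-> B' x).
Proof.
move=> hB AB hB' AB' BB' x /kernel_residue_decomp[r [w [wL ->]]].
have kernel_shift C : is_subgroup C -> subset_of A C ->
    C (residue_vec r + d *: w) <-> C (residue_vec r).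
  move=> hC AsubC; have Cdw := AsubC _ (LA wL).
  split=> Cx; last exact: subgroupD.
  by rewrite -(addrK (d *: w) (residue_vec r)); apply: subgroupB.
rewrite (kernel_shift B hB AB) (kernel_shift B' hB' AB'); exact: BB'.
Qed.

(* [key.1] is the rank of [B / (B :&: ker L)], and [key.2] records
   [B :&: ker L] through the residue vectors it contains. *)
Definition subgroup_invariant (B : 'rV[int]_n -> Prop)
    (key : ('I_n.+1 * {set residue})%type) : Prop :=
  (exists M : 'M[int]_(key.1, n), complement_basis L B M) /\
  (forall r, r \in key.2 <-> B (residue_vec r)).

Lemma subgroup_invariant_exists B :
  is_subgroup B -> exists key, subgroup_invariant B key.
Proof.
move=> hB; have [s [M [s_le_n BM]]] := complement_basis_exists L hB.
exists (Ordinal (s_le_n : (s < n.+1)%N), [set r | `[< B (residue_vec r) >]]).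
by split; [exists M | move=> r; rewrite inE; split=> /asboolP].
Qed.

Lemma subgroup_invariant_equiv B B' key :
  is_subgroup B -> subset_of A B -> is_subgroup B' -> subset_of A B' ->
  subgroup_invariant B key -> subgroup_invariant B' key -> equiv_over A B B'.
Proof.
move=> hB AB hB' AB' [[M BM] rB] [[M' BM'] rB'].
apply: (equiv_over_complement hB hB' AB AL BM BM').
by apply: subgroups_agree_on_kernel => // r; rewrite -rB rB'.
Qed.

Lemma int_finitely_many_classes_of_kernel : finitely_many_classes A.
Proof.
pose good B := is_subgroup B /\ subset_of A B.
have goodT : good (fun=> True) by do !split.
have [N [C [goodC classC]]] := finite_classes_of_invariant (rel := equiv_over A)
  goodT (fun B gB => subgroup_invariant_exists gB.1)
  (fun B B' key gB gB' => subgroup_invariant_equiv gB.1 gB.2 gB'.1 gB'.2).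
by exists N, C; split=> // B hB AB; apply: classC.
Qed.

End IntInvariant.

Lemma int_finitely_many_classes n (A : 'rV[int]_n -> Prop) :
  is_subgroup A -> finitely_many_classes A.
Proof.
move=> hA; have [L [d [d_gt0 AL LA]]] := int_subgroup_saturation hA.
have hK : is_subgroup (fun x : 'rV[int]_n => x *m L = 0).
  by split=> [|x y xL yL]; rewrite ?mul0mx // mulmxBl xL yL subrr.
have [sk [E [_ kerE]]] := int_basis_exists hK.
exact: (int_finitely_many_classes_of_kernel d_gt0 AL LA kerE).
Qed.

Section SurjectiveImage.
Variables (Q P : zmodType) (pi : Q -> P) (pre : P -> Q).
Hypotheses (piB : {morph pi : x y / x - y}) (preK : cancel pre pi).
Variable A : P -> Prop.
Hypothesis hA : is_subgroup A.

Definition image_of (C : Q -> Prop) (p : P) : Prop := exists2 x, C x & pi x = p.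

Lemma morph_pi0 : pi 0 = 0.
Proof. by rewrite -(subrr 0) piB subrr. Qed.

Lemma morph_piD : {morph pi : x y / x + y}.
Proof.
move=> x y; have -> : x + y = x - (0 - y) by rewrite sub0r opprK.
by rewrite !piB morph_pi0 sub0r opprK.
Qed.

Lemma preim_subgroup (B : P -> Prop) : is_subgroup B -> is_subgroup (B \o pi).
Proof.
by move=> hB; split=> [|x y Bx By] /=; rewrite ?morph_pi0 ?piB;
  [apply: subgroup0 | apply: subgroupB].
Qed.

Lemma image_subgroup (C : Q -> Prop) : is_subgroup C -> is_subgroup (image_of C).
Proof.
move=> hC; split; first by exists 0; [apply: subgroup0 | apply: morph_pi0].
by move=> _ _ [x Cx <-] [y Cy <-]; exists (x - y); [apply: subgroupB | apply: piB].
Qed.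

Lemma image_supset (C : Q -> Prop) : subset_of (A \o pi) C -> subset_of A (image_of C).
Proof.
by move=> AsubC a Aa; exists (pre a); rewrite ?preK //; apply: AsubC; rewrite /= preK.
Qed.

(* The kernel of [pi] lies in [A \o pi], where the isomorphism is the identity,
   so it descends along [pi]. *)
Lemma equiv_over_image (B : P -> Prop) (C : Q -> Prop) :
  is_subgroup B -> subset_of A B ->
  equiv_over (A \o pi) (B \o pi) C -> equiv_over A B (image_of C).
Proof.
move=> hB AB [f [fB [fD [fI [fS fA]]]]].
have Bpre p : B p -> B (pi (pre p)) by rewrite preK.
have f_sub x y : B (pi x) -> B (pi y) -> f (x - y) = f x - f y.
  move=> Bx By; apply/eqP; rewrite eq_sym subr_eq -fD ?subrK //=.
  by rewrite piB; apply: subgroupB.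
have kerA z : pi z = 0 -> A (pi z) by move->; apply: subgroup0.
have f_fiber x y : B (pi x) -> B (pi y) -> pi x = pi y -> pi (f x) = pi (f y).
  move=> Bx By xy; apply/eqP; rewrite -subr_eq0 -piB -f_sub //.
  have Axy : A (pi (x - y)) by apply: kerA; rewrite piB xy subrr.
  by rewrite fA // piB xy subrr.
exists (fun p => pi (f (pre p))); do !split.
- by move=> p Bp; exists (f (pre p)); last by []; apply: fB; apply: Bpre.
- move=> p q Bp Bq; rewrite -morph_piD -fD; [|exact: Bpre..].
  by apply: f_fiber; rewrite ?morph_piD ?preK //; apply: subgroupD.
- move=> p q Bp Bq gpq; set z := f (pre p) - f (pre q).
  have z0 : pi z = 0 by rewrite piB gpq subrr.
  have Az := kerA z z0.
  have Bpq : B (pi (pre p - pre q)) by rewrite piB !preK; apply: subgroupB.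
  have : pre p - pre q = z.
    apply: fI => //; first exact: AB.
    by rewrite (fA z Az) f_sub //; apply: Bpre.
  by move/(congr1 pi)/eqP; rewrite piB !preK z0 subr_eq0 => /eqP.
- move=> _ [_ /fS[x Bx <-] <-]; exists (pi x) => //.
  by apply: f_fiber; rewrite ?preK.
- by move=> a Aa; rewrite fA /= preK.
Qed.

Lemma finitely_many_classes_image :
  finitely_many_classes (A \o pi) -> finitely_many_classes A.
Proof.
move=> [N [C [goodC classC]]].
exists N, (fun i => image_of (C i)); split.
  move=> i; have [hCi ACi] := goodC i.
  by split; [apply: image_subgroup | apply: image_supset].
move=> B hB AB; have [|i BCi] := classC (B \o pi) (preim_subgroup hB).
  by move=> x; apply: AB.
by exists i; apply: equiv_over_image.
Qed.

End SurjectiveImage.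

Theorem lemma2p3 (P : zmodType) (A : P -> Prop) :
  fin_gen P -> is_subgroup A ->
  exists n : nat, exists C : 'I_n -> (P -> Prop),
    (forall i, is_subgroup (C i) /\ subset_of A (C i)) /\
    (forall B : P -> Prop, is_subgroup B -> subset_of A B ->
       exists i : 'I_n, equiv_over A B (C i)).
Proof.
move=> [n [g gen]] hA.
pose pi (x : 'rV[int]_n) := \sum_(i < n) g i *~ x 0 i.
have piB : {morph pi : x y / x - y}.
  by move=> x y; rewrite /pi -sumrB; apply: eq_bigr => i _; rewrite !mxE mulrzBr.
have /choice[pre preK] : forall p, exists x, pi x = p.
  move=> p; have [c ->] := gen p; exists (\row_i c i).
  by apply: eq_bigr => i _; rewrite mxE.
apply: (finitely_many_classes_image piB preK hA).
exact/int_finitely_many_classes/preim_subgroup.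
Qed.
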